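(* Let $r,p,q\ge1$ and $n\ge0$, and suppose the variety $\mathcal V$ is $(3,2r)$-modular (i.e. has $2r+1$ Day terms) and has $n+2$ Gumm terms. Then $\mathcal V$ is $(z,w)$-modular, where $z=2^p2^q-1$ and $w=2r^q+(2^q2^{p+1}-2^{q+2}-2p+2)n$.
   Context: $\circ$ is relational composition, juxtaposition is intersection. For relations $X,Y$ and $m\ge1$, $X\circ_m Y$ denotes $X\circ Y\circ X\circ\cdots$ with $m$ factors. For $m\ge3$, a variety is $(m,k)$-modular if each of its algebras satisfies $\alpha(\beta\circ_m\alpha\gamma)\subseteq\alpha\beta\circ_k\alpha\gamma$ for all congruences $\alpha,\beta,\gamma$. A variety has $n+2$ Gumm terms if it has ternary terms $p,j_1,\dots,j_{n+1}$ satisfying: $x=j_i(x,y,x)$ for all $i$; $x=p(x,z,z)$; $p(x,x,z)=j_1(x,x,z)$; $j_i(x,z,z)=j_{i+1}(x,z,z)$ for odd $i\le n$; $j_i(x,x,z)=j_{i+1}(x,x,z)$ for even $i\le n$; $j_{n+1}(x,y,z)=z$. *)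

From mathcomp Require Import all_boot.
Set Implicit Arguments. Unset Strict Implicit. Unset Printing Implicit Defensive.

Section UA.
Variable ops : Type.
Variable arity : ops -> nat.

Inductive term : Type :=
| Var : nat -> term
| App : forall f : ops, ('I_(arity f) -> term) -> term.

Record algebra : Type := Algebra {
  carrier :> Type;
  interp : forall f : ops, ('I_(arity f) -> carrier) -> carrier
}.

Fixpoint eval (A : algebra) (v : nat -> A) (t : term) : A :=
  match t with
  | Var i => v i
  | App f args => @interp A f (fun i => eval v (args i))
  end.

(** A variety is given by a set E of identities (Birkhoff); its members are
    the models of E. *)
Definition in_variety (E : term -> term -> Prop) (A : algebra) : Prop :=
  forall s t, E s t -> forall v : nat -> A, eval v s = eval v t.

Definition eval3 (A : algebra) (t : term) (a b c : A) : A :=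
  eval (fun i => match i with 0 => a | 1 => b | _ => c end) t.

Definition V_sat3 (E : term -> term -> Prop) (s t : term) : Prop :=
  forall A : algebra, in_variety E A -> forall a b c : A, eval3 s a b c = eval3 t a b c.

Definition congruence (A : algebra) (R : A -> A -> Prop) : Prop :=
  (forall x, R x x) /\ (forall x y, R x y -> R y x) /\
  (forall x y z, R x y -> R y z -> R x z) /\
  (forall f (a b : 'I_(arity f) -> A), (forall i, R (a i) (b i)) ->
     R (@interp A f a) (@interp A f b)).
End UA.

Definition rcomp (T : Type) (X Y : T -> T -> Prop) : T -> T -> Prop :=
  fun a c => exists b, X a b /\ Y b c.
Definition rint (T : Type) (X Y : T -> T -> Prop) : T -> T -> Prop :=
  fun a b => X a b /\ Y a b.

(** compn X Y m = X o Y o X o ... with m factors (m >= 1; m = 0 gives equality). *)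
Fixpoint compn (T : Type) (X Y : T -> T -> Prop) (m : nat) : T -> T -> Prop :=
  match m with
  | 0 => fun a b => a = b
  | 1 => X
  | S m' => rcomp X (compn Y X m')
  end.

Definition mk_modular (ops : Type) (arity : ops -> nat) (E : term arity -> term arity -> Prop)
    (m k : nat) : Prop :=
  forall (A : algebra arity), in_variety E A ->
  forall alpha beta gamma : A -> A -> Prop,
    congruence alpha -> congruence beta -> congruence gamma ->
    forall a b, rint alpha (compn beta (rint alpha gamma) m) a b ->
                compn (rint alpha beta) (rint alpha gamma) k a b.

(** n+2 Gumm terms p, j_1, ..., j_{n+1} (j is indexed by 1..n+1; j 0 and
    j i for i > n+1 are irrelevant). All identities are required to hold in
    every algebra of the variety. *)
Definition has_gumm_terms (ops : Type) (arity : ops -> nat)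
    (E : term arity -> term arity -> Prop) (n : nat) : Prop :=
  exists (p : term arity) (j : nat -> term arity),
  forall A : algebra arity, in_variety E A ->
    (forall i, 1 <= i <= n.+1 -> forall x y : A, x = eval3 (j i) x y x) /\
    (forall x z : A, x = eval3 p x z z) /\
    (forall x z : A, eval3 p x x z = eval3 (j 1) x x z) /\
    (forall i, 1 <= i <= n -> odd i -> forall x z : A,
        eval3 (j i) x z z = eval3 (j i.+1) x z z) /\
    (forall i, 1 <= i <= n -> ~~ odd i -> forall x z : A,
        eval3 (j i) x x z = eval3 (j i.+1) x x z) /\
    (forall x y z : A, eval3 (j n.+1) x y z = z).

From mathcomp Require Import all_boot zify.
From Stdlib Require Import RelationClasses FunctionalExtensionality ProofIrrelevance.
From Stdlib Require Import IndefiniteDescription.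
Set Implicit Arguments. Unset Strict Implicit. Unset Printing Implicit Defensive.

(* Write S(z, w) for alpha (beta o_z alpha gamma) <= alpha beta o_w alpha gamma, so that
   (z, w)-modularity is S(z, w) for all congruences of all algebras in the variety.

   For k odd, H := beta o_(k+1) alpha gamma ends with alpha gamma, hence
   beta o_(2k+1) alpha gamma = H o H^-1.  A chain a (beta o_(4k+3) alpha gamma) b therefore
   reads (a,v) ker(pr2) (c,v) (alpha gamma) (d,v') ker(pr2) (b,v') in the subalgebra of A^2
   of H-related pairs.  Applying S(3, 2r) there and projecting to the first coordinate,
   every kernel step becomes an alpha (beta o_(2k+1) alpha gamma) step, so S(2k+1, 2w)
   gives S(4k+3, 2rw).  Starting from S(3, 2r) this yields S(2^(q+1) - 1, 2 r^q).

   Given S(z, 2w) with z odd and a (beta o_(2z+1) alpha gamma) b split as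
   a (beta o_z alpha gamma) c (alpha gamma) d (beta o_z alpha gamma) b, the element
   e := p(b,d,c) is alpha gamma-related to b and S(z, 2w) links p(b,b,a) to e.  The maps
   u |-> j_i(b,u,a) send the given chain (alternately reversed) to alpha beta o alpha gamma
   chains that connect p(b,b,a) = j_1(b,b,a), ..., j_(n+1)(b,_,a) = a, of total length
   2nz + 1.  Hence S(2z+1, 2(nz + w)); p - 1 such steps give the stated bound. *)

Section Chains.
Variable T : Type.
Implicit Types (X Y : T -> T -> Prop) (a b c : T).

Lemma compnS X Y m a b : compn X Y m.+1 a b <-> exists c, X a c /\ compn Y X m c b.
Proof. by case: m => [|m] //=; split=> [ab|[c [ac <-]]] //; exists b. Qed.

Lemma compnD X Y m k a b : compn X Y (m + k) a b <->
  exists c, compn X Y m a c /\ (if odd m then compn Y X k c b else compn X Y k c b).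
Proof.
elim: m X Y a => [|m IH] X Y a; first by split=> [ab|[c [-> cb]]] //; exists a.
rewrite addSn /=; split.
- case/compnS=> c [ac /IH [d [cd db]]]; exists d; split; first by apply/compnS; exists c.
  by case: (odd m) db.
- case=> d [/compnS [c [ac cd]] db]; apply/compnS; exists c; split=> //.
  by apply/IH; exists d; split=> //; case: (odd m) db.
Qed.

Lemma compn_refl X Y m : Reflexive X -> Reflexive Y -> Reflexive (compn X Y m).
Proof.
elim: m X Y => [|m IH] X Y rX rY a //.
by apply/compnS; exists a; split; [exact: rX | exact: IH].
Qed.

Lemma compn_converse X Y m a b : Symmetric X -> Symmetric Y ->
  compn X Y m a b -> if odd m then compn X Y m b a else compn Y X m b a.
Proof.
elim: m X Y a b => [|m IH] X Y a b sX sY; first by move=> /= ->.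
case/compnS=> c [ac /(IH _ _ _ _ sY sX) cb].
rewrite -addn1 oddD; case om: (odd m) cb => /= cb.
all: by apply/compnD; exists c; rewrite om; split=> //; apply: sX.
Qed.

Lemma compn_converse_odd X Y m a b : Symmetric X -> Symmetric Y -> odd m ->
  compn X Y m a b -> compn X Y m b a.
Proof. by move=> sX sY om /(compn_converse sX sY); rewrite om. Qed.

Lemma compn_merge X Y j k a b c : Transitive X -> 0 < k ->
  compn X Y j.*2.+1 a b -> compn X Y k b c -> compn X Y (j.*2 + k) a c.
Proof.
move=> tX; case: k => // k _; rewrite -[j.*2.+1]addn1 => /compnD [d [ad]].
rewrite odd_double => db /compnS [e [be ec]].
apply/compnD; exists d; split; rewrite // odd_double.
by apply/compnS; exists e; split; first exact: tX db be.
Qed.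

Lemma compn_absorb X Y j a b c : Transitive Y -> 0 < j ->
  compn X Y j.*2 a b -> Y b c -> compn X Y j.*2 a c.
Proof.
move=> tY; case: j => // j _; rewrite doubleS -[j.*2.+2]addn1 => /compnD [d [ad]].
move=> db bc; apply/compnD; exists d; split=> //.
by move: db; rewrite /= odd_double => db; exact: tY db bc.
Qed.

Lemma compn_split_mid X Y z a b : odd z -> compn X Y z.*2.+1 a b ->
  exists c d, [/\ compn X Y z a c, Y c d & compn X Y z d b].
Proof.
move=> oz; rewrite -addnn -addnS => /compnD [c [ac]]; rewrite oz => /compnS [d [cd db]].
by exists c, d.
Qed.

Lemma compn_halves X Y k a b : Reflexive Y -> Symmetric X -> Symmetric Y -> Transitive Y ->
  odd k -> compn X Y k.*2.+1 a b <-> exists v, compn X Y k.+1 a v /\ compn X Y k.+1 b v.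
Proof.
move=> rY sX sY tY ok; have ok1 : odd k.+1 = false by rewrite /= ok.
rewrite -addnn -addSn; split.
- case/compnD=> v [av]; rewrite ok1 => /(compn_converse_odd sX sY ok) bv.
  exists v; split=> //; rewrite -addn1; apply/compnD; exists v; rewrite ok; split=> //; exact: rY.
- case=> v [av /(compn_converse sX sY)]; rewrite ok1 => /compnS [w [vw wb]].
  apply/compnD; exists w; rewrite ok1; split=> //.
  move: av; rewrite -[k.+1]addn1 => /compnD [u [au]]; rewrite ok => uv.
  by apply/compnD; exists u; rewrite ok; split=> //; exact: tY uv vw.
Qed.

Lemma compn_flatten (X' : T -> T -> Prop) X Y r w a b : Transitive Y -> 0 < w ->
  (forall x y, X' x y -> compn X Y w.*2 x y) ->
  compn X' Y (2 * r) a b -> compn X Y (r * w).*2 a b.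
Proof.
move=> tY w_gt0 X'X; elim: r a => [|r IH] a; first by rewrite mul0n => /= ->.
rewrite mulnS => /compnS [c [ac /compnS [d [cd db]]]].
rewrite mulSn doubleD; apply/compnD; exists d; rewrite odd_double; split; last exact: IH.
exact: compn_absorb tY _ (X'X _ _ ac) cd.
Qed.

Lemma compn_path X Y z k (f : nat -> T) : Reflexive X -> Transitive X ->
  (forall i, i < k -> compn X Y z.*2.+1 (f i) (f i.+1)) -> compn X Y (k * z).*2.+1 (f 0) (f k).
Proof.
move=> rX tX; elim: k => [|k IH] link; first exact: rX.
rewrite mulSn doubleD addnC -addnS; apply: compn_merge tX _ _ (link k _) => //.
by apply: IH => i ik; apply: link; apply: ltnW.
Qed.

End Chains.

Lemma compn_map (U T : Type) (h : U -> T) (X' Y' : U -> U -> Prop) (X Y : T -> T -> Prop)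
    m (a b : U) :
  (forall x y, X' x y -> X (h x) (h y)) -> (forall x y, Y' x y -> Y (h x) (h y)) ->
  compn X' Y' m a b -> compn X Y m (h a) (h b).
Proof.
elim: m X' Y' X Y a => [|m IH] X' Y' X Y a hX hY; first by move=> /= ->.
case/compnS=> c [ac cb]; apply/compnS; exists (h c); split; [exact: hX | exact: IH cb].
Qed.

Section Algebras.
Variables (ops : Type) (arity : ops -> nat).
Implicit Types (A B : algebra arity).

Definition compatible A (R : A -> A -> Prop) :=
  forall f (x y : 'I_(arity f) -> A), (forall i, R (x i) (y i)) -> R (interp x) (interp y).

Lemma eval_compatible A (R : A -> A -> Prop) (v w : nat -> A) t :
  compatible R -> (forall i, R (v i) (w i)) -> R (eval v t) (eval w t).
Proof. by move=> cR vw; elim: t => [i|f args IH] /=; [exact: vw | apply: cR]. Qed.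

Lemma eval3_compatible A (R : A -> A -> Prop) t (a a' b b' c c' : A) :
  compatible R -> R a a' -> R b b' -> R c c' -> R (eval3 t a b c) (eval3 t a' b' c').
Proof. by move=> cR aa' bb' cc'; apply: eval_compatible => // -[|[|i]]. Qed.

Lemma compatible_rcomp A (R S : A -> A -> Prop) :
  compatible R -> compatible S -> compatible (rcomp R S).
Proof.
move=> cR cS f x y xy.
have [z xzy] := functional_choice (fun i z => R (x i) z /\ S z (y i)) xy.
by exists (interp z); split; [apply: cR | apply: cS] => i; case: (xzy i).
Qed.

Lemma congruence_eq A : congruence (@eq A).
Proof.
split=> [//|]; split=> [x y -> //|]; split=> [x y z -> -> //|].
by move=> f x y xy; congr interp; apply: functional_extensionality.
Qed.

Lemma compatible_compn A (X Y : A -> A -> Prop) m :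
  compatible X -> compatible Y -> compatible (compn X Y m).
Proof.
elim: m X Y => [|m IH] X Y cX cY; first by case: (congruence_eq A) => _ [_ [_]].
move=> f x y xy; apply/compnS.
by apply: (compatible_rcomp cX (IH _ _ cY cX)) => i; apply/compnS.
Qed.

Lemma rint_congruence A (R S : A -> A -> Prop) :
  congruence R -> congruence S -> congruence (rint R S).
Proof.
move=> [rR [sR [tR cR]]] [rS [sS [tS cS]]]; split; [|split; [|split]].
- by move=> x; split.
- by move=> x y [xyR xyS]; split; [apply: sR | apply: sS].
- by move=> x y z [xyR xyS] [yzR yzS]; split; [apply: tR xyR yzR | apply: tS xyS yzS].
- by move=> f x y xy; split; [apply: cR | apply: cS] => i; case: (xy i).
Qed.

Definition hom A B (h : A -> B) :=
  forall f (x : 'I_(arity f) -> A), h (interp x) = interp (h \o x).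

Lemma eval_hom A B (h : A -> B) (v : nat -> A) t : hom h -> h (eval v t) = eval (h \o v) t.
Proof.
move=> hh; elim: t => [//|f args IH] /=; rewrite hh; congr interp.
by apply: functional_extensionality => i /=; rewrite IH.
Qed.

Lemma congruence_preim A B (h : A -> B) (R : B -> B -> Prop) :
  hom h -> congruence R -> congruence (fun x y => R (h x) (h y)).
Proof.
move=> hh [rR [sR [tR cR]]]; split; [|split; [|split]].
- by move=> x; apply: rR.
- by move=> x y; apply: sR.
- by move=> x y z; apply: tR.
- by move=> f x y xy; rewrite !hh; apply: cR.
Qed.

Lemma in_variety_jointly_injective E A B (h1 h2 : B -> A) : hom h1 -> hom h2 ->
  (forall x y, h1 x = h1 y -> h2 x = h2 y -> x = y) -> in_variety E A -> in_variety E B.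
Proof. by move=> hh1 hh2 h12_inj AE s t st v; apply: h12_inj; rewrite !eval_hom //; apply: AE. Qed.

Section PairAlgebra.
Variables (A : algebra arity) (Y : A -> A -> Prop).
Hypothesis cY : compatible Y.

Definition pairs := {uv : A * A | Y uv.1 uv.2}.

Definition pairs_interp f (x : 'I_(arity f) -> pairs) : pairs :=
  exist _ (interp (fun i => (sval (x i)).1), interp (fun i => (sval (x i)).2))
    (cY (fun i => proj2_sig (x i))).

Definition pair_algebra : algebra arity := Algebra pairs_interp.

Definition pfst (x : pair_algebra) : A := (sval x).1.
Definition psnd (x : pair_algebra) : A := (sval x).2.

Lemma hom_pfst : hom pfst. Proof. by []. Qed.
Lemma hom_psnd : hom psnd. Proof. by []. Qed.

Lemma pair_algebra_in_variety E : in_variety E A -> in_variety E pair_algebra.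
Proof.
apply: in_variety_jointly_injective hom_pfst hom_psnd _.
move=> [[u v] uv] [[u' v'] uv']; rewrite /pfst /psnd /= => eu ev.
by move: uv'; rewrite -eu -ev => uv'; congr exist; apply: proof_irrelevance.
Qed.

End PairAlgebra.
End Algebras.

Section GummChain.
Variables (ops : Type) (arity : ops -> nat) (A : algebra arity).
Variables (n : nat) (p : term arity) (j : nat -> term arity).
Hypothesis j_idem : forall i, 1 <= i <= n.+1 -> forall x y : A, x = eval3 (j i) x y x.
Hypothesis p_j1 : forall x z : A, eval3 p x x z = eval3 (j 1) x x z.
Hypothesis j_odd : forall i, 1 <= i <= n -> odd i -> forall x z : A,
  eval3 (j i) x z z = eval3 (j i.+1) x z z.
Hypothesis j_even : forall i, 1 <= i <= n -> ~~ odd i -> forall x z : A,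
  eval3 (j i) x x z = eval3 (j i.+1) x x z.
Hypothesis j_last : forall x y z : A, eval3 (j n.+1) x y z = z.
Variables alpha beta gamma : A -> A -> Prop.
Hypotheses (Ha : congruence alpha) (Hb : congruence beta) (Hg : congruence gamma).
Variables a b : A.
Hypothesis ab_alpha : alpha a b.

Let ag := rint alpha gamma.
Let ab := rint alpha beta.

Lemma gumm_term_chain i m u u' : 1 <= i <= n.+1 ->
  compn beta ag m u u' -> compn ab ag m (eval3 (j i) b u a) (eval3 (j i) b u' a).
Proof.
move=> i_range; have [ra [sa [ta ca]]] := Ha; have [rb [_ [_ cb]]] := Hb.
have [rag [_ [_ cag]]] := rint_congruence Ha Hg.
have j_alpha x : alpha (eval3 (j i) b x a) b.
  rewrite [X in alpha _ X](j_idem i_range b x).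
  exact: eval3_compatible ca (ra b) (ra x) ab_alpha.
apply: (compn_map (h := fun x => eval3 (j i) b x a)) => x y xy.
- split; first exact: ta (j_alpha x) (sa _ _ (j_alpha y)).
  exact: eval3_compatible cb (rb b) xy (rb a).
- exact: eval3_compatible cag (rag b) xy (rag a).
Qed.

Lemma gumm_chain z : compn beta ag z.*2.+1 a b -> compn ab ag (n * z).*2.+1 (eval3 p b b a) a.
Proof.
move=> ab_chain; have [_ [sb _]] := Hb; have [_ [sag _]] := rint_congruence Ha Hg.
have [rab [_ [tab _]]] := rint_congruence Ha Hb.
have odd_z2 : odd z.*2.+1 by rewrite oddS odd_double.
have ba_chain := compn_converse_odd sb sag odd_z2 ab_chain.
pose f i := eval3 (j i.+1) b (if odd i then a else b) a.
have -> : eval3 p b b a = f 0 by rewrite p_j1.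
have -> : a = f n by rewrite /f j_last.
apply: compn_path rab tab _ => i i_lt.
have i_range : 1 <= i.+1 <= n by [].
have i_range' : 1 <= i.+1 <= n.+1 by lia.
rewrite /f /=; case oi: (odd i) => /=.
- have even_i1 : ~~ odd i.+1 by rewrite /= oi.
  rewrite -(j_even i_range even_i1 b a); exact: gumm_term_chain i_range' ab_chain.
- have odd_i1 : odd i.+1 by rewrite /= oi.
  rewrite -(j_odd i_range odd_i1 b a); exact: gumm_term_chain i_range' ba_chain.
Qed.

End GummChain.

Section Modularity.
Variables (ops : Type) (arity : ops -> nat) (E : term arity -> term arity -> Prop).

Lemma day_step r k w : odd k -> 0 < w -> mk_modular E 3 (2 * r) ->
  mk_modular E k.*2.+1 w.*2 -> mk_modular E (k.*2.+1).*2.+1 (r * w).*2.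
Proof.
move=> ok w_gt0 day mod_kw A AE alpha beta gamma Ha Hb Hg a b [ab_alpha ab_chain].
set ag := rint alpha gamma.
have Hag : congruence ag := rint_congruence Ha Hg.
have [_ [sb [_ cb]]] := Hb; have [rag [sag [tag cag]]] := Hag.
have halves := compn_halves _ _ rag sb sag tag ok.
have odd_z : odd k.*2.+1 by rewrite oddS odd_double.
have [c [d [ac cd db]]] := compn_split_mid odd_z ab_chain.
have [v [av cv]] := (halves a c).1 ac.
have [v' [dv' bv']] := (halves d b).1 db.
have cY : compatible (compn beta ag k.+1) := compatible_compn cb cag.
pose alpha1 := fun x y : pair_algebra cY => alpha (pfst x) (pfst y).
pose gamma1 := fun x y : pair_algebra cY => gamma (pfst x) (pfst y).
pose eq2 := fun x y : pair_algebra cY => psnd x = psnd y.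
pose P : pair_algebra cY := exist _ (a, v) av.
pose S : pair_algebra cY := exist _ (b, v') bv'.
have PS : compn (rint alpha1 eq2) (rint alpha1 gamma1) (2 * r) P S.
  apply: (day (pair_algebra cY) (pair_algebra_in_variety AE) alpha1 eq2 gamma1).
  - exact: congruence_preim (hom_pfst (cY:=cY)) Ha.
  - exact: congruence_preim (hom_psnd (cY:=cY)) (congruence_eq A).
  - exact: congruence_preim (hom_pfst (cY:=cY)) Hg.
  split=> //; exists (exist _ (c, v) cv); split=> //.
  by exists (exist _ (d, v') dv'); split.
have ab_chain' : compn (rint alpha (compn beta ag k.*2.+1)) ag (2 * r) a b.
  apply: (compn_map (h := pfst (cY:=cY)) _ _ PS) => [x y [xy_alpha xy_eq]|//].
  split=> //; apply/halves; exists (psnd x).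
  by split; [exact: (proj2_sig x) | rewrite xy_eq; exact: (proj2_sig y)].
apply: (compn_flatten tag w_gt0 _ ab_chain') => x y [xy_alpha xy_chain].
exact: mod_kw.
Qed.

Lemma gumm_step n z w : has_gumm_terms E n -> odd z -> 0 < w ->
  mk_modular E z w.*2 -> mk_modular E z.*2.+1 (n * z + w).*2.
Proof.
move=> [p [j gumm]] oz w_gt0 mod_zw A AE alpha beta gamma Ha Hb Hg a b [ab_alpha ab_chain].
have [j_idem [p_xzz [p_j1 [j_odd [j_even j_last]]]]] := gumm A AE.
have g_a := gumm_chain j_idem p_j1 j_odd j_even j_last Ha Hb Hg ab_alpha ab_chain.
set ag := rint alpha gamma in ab_chain g_a *; set ab := rint alpha beta in g_a *.
have [ra [sa [ta ca]]] := Ha; have [rb [sb [_ cb]]] := Hb.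
have [rag [sag [tag cag]]] := rint_congruence Ha Hg.
have [_ [sab [tab _]]] := rint_congruence Ha Hb.
have odd_nz2 : odd (n * z).*2.+1 by rewrite oddS odd_double.
have a_g := compn_converse_odd sab sag odd_nz2 g_a.
have [c [d [ac cd db]]] := compn_split_mid oz ab_chain.
pose e := eval3 p b d c.
have e_b : ag e b.
  rewrite [X in ag _ X](p_xzz b c); exact: eval3_compatible cag (rag b) (sag _ _ cd) (rag c).
have g_b : alpha (eval3 p b b a) b.
  rewrite [X in alpha _ X](p_xzz b b); exact: eval3_compatible ca (ra b) (ra b) ab_alpha.
have g_e : compn ab ag w.*2 (eval3 p b b a) e.
  apply: mod_zw => //; split; first exact: ta g_b (sa _ _ e_b.1).
  exact: eval3_compatible (compatible_compn cb cag) (compn_refl z rb rag b)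
    (compn_converse_odd sb sag oz db) ac.
apply: (compn_absorb tag _ _ e_b); first by rewrite addn_gt0 w_gt0 orbT.
by rewrite doubleD; apply: compn_merge tab _ a_g g_e; rewrite double_gt0.
Qed.

Lemma day_iter r : 0 < r -> mk_modular E 3 (2 * r) ->
  forall j, mk_modular E (2 ^ j.+2 - 1) (r ^ j.+1).*2.
Proof.
move=> r_gt0 day; elim=> [|j IH]; first by rewrite expn1 -mul2n.
have k_odd : odd (2 ^ j.+1 - 1) by rewrite oddB ?expn_gt0 // oddX.
have w_gt0 : 0 < r ^ j.+1 by rewrite expn_gt0 r_gt0.
have pow2S i : (2 ^ i.+1 - 1).*2.+1 = 2 ^ i.+2 - 1.
  have pow_gt0 : 0 < 2 ^ i.+1 by rewrite expn_gt0.
  by rewrite [2 ^ i.+2]expnS; lia.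
by have := day_step k_odd w_gt0 day; rewrite -expnS !pow2S; apply.
Qed.

Lemma gumm_iter n z w : has_gumm_terms E n -> odd z -> 0 < w -> mk_modular E z w.*2 ->
  forall i, mk_modular E (2 ^ i * z.+1 - 1) (w + n * ((2 ^ i - 1) * z.+1 - i)).*2.
Proof.
move=> gumm oz w_gt0 mod_zw; elim=> [|i IH].
  by rewrite expn0 mul1n subn1 subnn mul0n sub0n muln0 addn0.
have even_z1 : ~~ odd z.+1 by rewrite oddS oz.
have m_gt_i : z.+1 + i <= 2 ^ i * z.+1 by have := ltn_expl i (ltnSn 1); nia.
have odd_zi : odd (2 ^ i * z.+1 - 1).
  by rewrite oddB ?muln_gt0 ?expn_gt0 // oddM (negbTE even_z1) andbF.
have := gumm_step gumm odd_zi _ IH; rewrite addn_gt0 w_gt0 => /(_ isT).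
rewrite expnS -mulnA.
set m := 2 ^ i * z.+1 in m_gt_i odd_zi *.
have -> : (m - 1).*2.+1 = 2 * m - 1 by lia.
rewrite addnCA -mulnDr [(2 ^ i - 1) * _]mulnBl [(2 * 2 ^ i - 1) * _]mulnBl -mulnA -/m !mul1n.
by have -> : m - 1 + (m - z.+1 - i) = 2 * m - z.+1 - i.+1 by lia.
Qed.
End Modularity.

Lemma gumm_excess_closed p q :
  ((2 ^ p - 1) * 2 ^ q.+2 - p).*2 = (2 ^ q.+1 * 2 ^ p.+2 + 2) - 2 ^ q.+3 - 2 * p.+1.
Proof.
have p_lt : p < 2 ^ p by rewrite ltn_expl.
have y_gt0 : 0 < 2 ^ q by rewrite expn_gt0.
rewrite !(expnS 2) mulnBl mul1n.
set x := 2 ^ p in p_lt *; set y := 2 ^ q in y_gt0 *.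
nia.
Qed.

Theorem theorem5p1 (ops : Type) (arity : ops -> nat)
    (E : term arity -> term arity -> Prop) (r p q n : nat) :
  1 <= r -> 1 <= p -> 1 <= q ->
  mk_modular E 3 (2 * r) ->
  has_gumm_terms E n ->
  mk_modular E (2 ^ p * 2 ^ q - 1)
    (2 * r ^ q + ((2 ^ q * 2 ^ p.+1 + 2) - 2 ^ q.+2 - 2 * p) * n).
Proof.
move=> r_gt0; case: p => // p _; case: q => // q _ day gumm.
have odd_z : odd (2 ^ q.+2 - 1) by rewrite oddB ?expn_gt0 // oddX.
have rq_gt0 : 0 < r ^ q.+1 by rewrite expn_gt0 r_gt0.
have := gumm_iter (i:=p) gumm odd_z rq_gt0 (day_iter (j:=q) r_gt0 day).
have -> : (2 ^ q.+2 - 1).+1 = 2 ^ q.+2 by rewrite subn1 prednK ?expn_gt0.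
have -> : 2 ^ p * 2 ^ q.+2 = 2 ^ p.+1 * 2 ^ q.+1 by rewrite -!expnD addnS.
by rewrite doubleD doubleMr gumm_excess_closed -[(r ^ q.+1).*2]mul2n [n * _]mulnC.
Qed.
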